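(* Let $(\mathbb{F}_t)_{t\in\mathbb{N}}$ be a filtration on $\mathcal{E}$ with ranges $\mathcal{F}_t$, let $(X^{(i)}_t)_{t\in\mathbb{N}}$, $i=1,\dots,n$, be martingales with respect to $(\mathbb{F}_t)$, and let $g:\mathbb{R}^n\to\mathbb{R}$ be a continuous convex function. Write $\mathbf{X}_t=(X^{(1)}_t,\dots,X^{(n)}_t)$. If $g(\mathbf{X}_t)\in\mathcal{E}$ for all $t$, then $(g(\mathbf{X}_t))_{t\in\mathbb{N}}$ is a sub-martingale with respect to $(\mathbb{F}_t)$.
   Context: Let $\mathcal{E}$ be an order complete vector lattice with a weak order unit $E$, $K$ its Stone space, and $C^\infty(K)$ the vector lattice of continuous functions $K\to[-\infty,\infty]$ finite off a nowhere dense set (identified when equal off a nowhere dense set), the universal completion of $\mathcal{E}$. Fix a Maeda–Ogasawara representation of $\mathcal{E}$ as an order dense ideal of $C^\infty(K)$ with $E$ corresponding to $\mathbf{1}$. For continuous $g:\mathbb{R}^n\to\mathbb{R}$ and $X_1,\dots,X_n\in C^\infty(K)$, $g(X_1,\dots,X_n)$ denotes the unique element of $C^\infty(K)$ agreeing with $\omega\mapsto g(X_1(\omega),\dots,X_n(\omega))$ on the open dense set where all $X_i$ are finite. A conditional expectation on $\mathcal{E}$ is an order continuous, strictly positive linear projection $\mathbb{F}:\mathcal{E}\to\mathcal{E}$ whose range is an order complete vector sublattice of $\mathcal{E}$ and with $\mathbb{F}E=E$. A filtration is a family $(\mathbb{F}_t)$ of conditional expectations with $\mathbb{F}_s=\mathbb{F}_s\mathbb{F}_t=\mathbb{F}_t\mathbb{F}_s$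 for $s\le t$; $\mathcal{F}_t$ is the range of $\mathbb{F}_t$. A process $(X_t)$ in $\mathcal{E}$ is adapted if $X_t\in\mathcal{F}_t$ for all $t$; an adapted process is a sub-martingale if $\mathbb{F}_t(X_s)\ge X_t$ for all $t\le s$, a super-martingale if $\mathbb{F}_t(X_s)\le X_t$ for all $t\le s$, and a martingale if both hold. *)

From HB Require Import structures.
From mathcomp Require Import all_boot all_order all_algebra.
From mathcomp Require Import all_classical all_reals all_analysis.
Set Implicit Arguments. Unset Strict Implicit. Unset Printing Implicit Defensive.
Import Order.TTheory GRing.Theory Num.Theory.
Local Open Scope classical_set_scope.
Local Open Scope ring_scope.

Section Defs.
Context {R : realType} {K : topologicalType}.
Local Notation fn := (K -> \bar R).

Definition nowhere_dense (A : set K) : Prop := interior (closure A) = set0.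

Definition extremally_disconnected : Prop :=
  forall A : set K, open A -> open (closure A).

(* K is a Stone space of an order complete vector lattice:
   compact Hausdorff extremally disconnected *)
Definition stone_setting : Prop :=
  [/\ compact [set: K], hausdorff_space K & extremally_disconnected].

(* membership in C^infty(K): continuous K -> [-oo,+oo], finite off a
   nowhere dense set.  (Two such functions equal off a nowhere dense set
   are equal everywhere, so no quotient is needed.) *)
Definition Cinf (f : fn) : Prop :=
  continuous f /\ nowhere_dense [set w | ~ (f w \is a fin_num)%E].

Definition cle (f g : fn) : Prop := forall w, (f w <= g w)%E.
Definition clt (f g : fn) : Prop := cle f g /\ f <> g.
Definition czero : fn := fun _ => 0%E.
Definition cone : fn := fun _ => 1%E.

(* vector lattice operations of C^infty(K): h is the (unique) element of
   C^infty(K) agreeing with the pointwise operation where the arguments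
   are finite *)
Definition is_sum (f g h : fn) : Prop :=
  Cinf h /\ forall w, (f w \is a fin_num)%E -> (g w \is a fin_num)%E ->
    h w = (f w + g w)%E.
Definition is_scale (a : R) (f h : fn) : Prop :=
  Cinf h /\ forall w, (f w \is a fin_num)%E -> h w = (a%:E * f w)%E.
Definition is_max (f g h : fn) : Prop :=
  Cinf h /\ forall w, (f w \is a fin_num)%E -> (g w \is a fin_num)%E ->
    h w = Order.max (f w) (g w).

Definition cinf_apply (n : nat) (g : 'rV[R]_n -> R) (X : 'I_n -> fn) (h : fn)
  : Prop :=
  Cinf h /\ forall w, (forall i, (X i w \is a fin_num)%E) ->
    h w = (g (\row_i fine (X i w)))%:E.

Definition riesz_ideal (P : set fn) : Prop :=
  [/\ (forall f, P f -> Cinf f), P czero,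
      (forall f g h, P f -> P g -> is_sum f g h -> P h),
      (forall a f h, P f -> is_scale a f h -> P h) &
      (forall f g, Cinf f -> P g -> (forall w, (`|f w| <= `|g w|)%E) -> P f)].

Definition order_dense (P : set fn) : Prop :=
  forall f, Cinf f -> clt czero f -> exists g, [/\ P g, clt czero g & cle g f].

Definition is_sup_in (P D : set fn) (x : fn) : Prop :=
  [/\ P x, (forall y, D y -> cle y x) &
      (forall z, P z -> (forall y, D y -> cle y z) -> cle x z)].
Definition is_inf_in (P D : set fn) (x : fn) : Prop :=
  [/\ P x, (forall y, D y -> cle x y) &
      (forall z, P z -> (forall y, D y -> cle z y) -> cle z x)].

Definition order_complete (P : set fn) : Prop :=
  forall D, D `<=` P -> D !=set0 -> (exists u, P u /\ forall y, D y -> cle y u) ->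
    exists s, is_sup_in P D s.

Definition vector_sublattice (P S : set fn) : Prop :=
  [/\ S `<=` P, S czero,
      (forall f g h, S f -> S g -> is_sum f g h -> S h),
      (forall a f h, S f -> is_scale a f h -> S h) &
      (forall f g h, S f -> S g -> is_max f g h -> S h)].

Definition range_op (P : set fn) (F : fn -> fn) : set fn := F @` P.

(* conditional expectation on E = P *)
Definition cond_exp (P : set fn) (F : fn -> fn) : Prop :=
  [/\ (forall f, P f -> P (F f)),
      (forall f g h, P f -> P g -> is_sum f g h -> is_sum (F f) (F g) (F h)) /\
      (forall a f h, P f -> is_scale a f h -> is_scale a (F f) (F h)),
      (forall D, D `<=` P -> D !=set0 ->
         (forall x y, D x -> D y -> (exists z, [/\ D z, cle z x & cle z y])) ->
         is_inf_in P D czero -> is_inf_in P (F @` D) czero),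
      (forall f, P f -> cle czero f -> cle czero (F f)) /\
      (forall f, P f -> clt czero f -> clt czero (F f)) &
      (forall f, P f -> F (F f) = F f) /\
      [/\ vector_sublattice P (range_op P F), order_complete (range_op P F) &
          F cone = cone]].

Definition filtration (P : set fn) (F : nat -> fn -> fn) : Prop :=
  (forall t, cond_exp P (F t)) /\
  forall s t, (s <= t)%N -> forall f, P f ->
    F s f = F s (F t f) /\ F s f = F t (F s f).

Definition adapted (P : set fn) (F : nat -> fn -> fn) (X : nat -> fn) : Prop :=
  forall t, range_op P (F t) (X t).

Definition submartingale (P : set fn) (F : nat -> fn -> fn) (X : nat -> fn) :=
  adapted P F X /\ forall t s, (t <= s)%N -> cle (X t) (F t (X s)).

Definition supermartingale (P : set fn) (F : nat -> fn -> fn) (X : nat -> fn) :=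
  adapted P F X /\ forall t s, (t <= s)%N -> cle (F t (X s)) (X t).

Definition martingale (P : set fn) (F : nat -> fn -> fn) (X : nat -> fn) :=
  submartingale P F X /\ supermartingale P F X.

End Defs.

Definition convex_fun {R : realType} {n : nat} (g : 'rV[R]_n -> R) : Prop :=
  forall (x y : 'rV[R]_n) (l : R), 0 <= l -> l <= 1 ->
    g (l *: x + (1 - l) *: y) <= l * g x + (1 - l) * g y.

Definition continuous_rv {R : realType} {n : nat} (g : 'rV[R]_n -> R) : Prop :=
  continuous (g : 'rV[R^o]_n -> R^o).

From Pilot Require Import Defs.
From HB Require Import structures.
From mathcomp Require Import all_boot all_order all_algebra.
From mathcomp Require Import all_classical all_reals all_analysis.
From mathcomp Require Import ring lra.
Import numFieldNormedType.Exports.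
Set Implicit Arguments. Unset Strict Implicit. Unset Printing Implicit Defensive.
Import Order.TTheory GRing.Theory Num.Theory.
Local Open Scope classical_set_scope.
Local Open Scope ring_scope.

(* Conditional Jensen inequality via affine minorants.  At a point [w] where
   all [X^(i)_t] are finite, the convex [g] has an affine minorant
   [b + sum_i a_i x_i] touching it at [X_t(w)]; the element
   [L = b + sum_i a_i X^(i)_s] of [P] lies below [g(X_s)], so by positivity
   [F_t L <= F_t g(X_s)], while [F_t L = b + sum_i a_i X^(i)_t] equals [g(X_t)]
   at [w].  Such points are dense and both sides are continuous, so
   [g(X_t) <= F_t g(X_s)] everywhere.  Adaptedness follows from the case
   [s = t]: [F_t g(X_t) - g(X_t)] is positive and killed by [F_t], hence zero
   by strict positivity.  The sums and scalar multiples used along the way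
   exist in [C^oo(K)] because a continuous real function on an open dense
   subset of the extremally disconnected space [K] extends to [K]. *)

Lemma lte_between_fin (R : realType) (x y : \bar R) : (x < y)%E ->
  exists r : R, (x < r%:E < y)%E.
Proof.
case: x => [x| |]; case: y => [y| |] //=.
- by rewrite lte_fin => xy; exists ((x + y) / 2); rewrite !lte_fin; apply/andP; split; lra.
- by exists (x + 1); rewrite ltry lte_fin andbT; lra.
- by exists (y - 1); rewrite ltNyr lte_fin; lra.
- by exists 0; rewrite ltNyr ltry.
Qed.

Definition open_dense (T : topologicalType) (S : set T) := open S /\ dense S.

Lemma open_denseI (T : topologicalType) (A B : set T) :
  open_dense A -> open_dense B -> open_dense (A `&` B).
Proof. by move=> [oA dA] [oB dB]; split; [exact: openI | exact: denseI]. Qed.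

Lemma open_dense_all (T : topologicalType) (I : eqType) (s : seq I) (A : I -> set T) :
  (forall i, open_dense (A i)) -> open_dense [set w | forall i, i \in s -> A i w].
Proof.
move=> odA; elim: s => [|j s IHs].
  rewrite (_ : [set w | _] = setT); last by apply/seteqP; split => // w _ i.
  by split; [exact: openT | move=> V [x Vx] _; exists x].
rewrite (_ : [set w | _] = A j `&` [set w | forall i, i \in s -> A i w]).
  exact: open_denseI.
apply/seteqP; split => w /=.
  by move=> Aw; split=> [|i si]; apply: Aw; rewrite inE ?eqxx ?si ?orbT.
by move=> [Ajw Asw] i; rewrite inE => /orP[/eqP -> //|]; exact: Asw.
Qed.

Lemma interior_setC_dense (T : topologicalType) (U : set T) :
  dense U -> interior (~` U) = set0.
Proof.
move=> dU; apply/seteqP; split => // z; rewrite /interior /= nbhsE => -[V [oV Vz] VU].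
by have [x [Vx Ux]] := dU V (ex_intro _ z Vz) oV; exact: VU Vx Ux.
Qed.

Section ExtendedRealContinuous.
Variables (R : realType) (K : topologicalType).
Implicit Types (f g : K -> \bar R) (S : set K).

Lemma near_ereal_gt f w (y : \bar R) :
  {for w, continuous f} -> (y < f w)%E -> \forall x \near w, (y < f x)%E.
Proof.
move=> cf yf; apply: (cf [set u | (y < u)%E]); apply: open_nbhs_nbhs.
by split => //; exact: open_ereal_gt_ereal.
Qed.

Lemma near_ereal_lt f w (y : \bar R) :
  {for w, continuous f} -> (f w < y)%E -> \forall x \near w, (f x < y)%E.
Proof.
move=> cf yf; apply: (cf [set u | (u < y)%E]); apply: open_nbhs_nbhs.
by split => //; exact: open_ereal_lt_ereal.
Qed.

Lemma open_fin_num f : continuous f -> open [set w | f w \is a fin_num]%E.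
Proof.
move=> cf; rewrite openE => w /= fw.
have gt : (-oo < f w)%E by rewrite ltNye; case: (f w) fw.
have lt : (f w < +oo)%E by rewrite ltey; case: (f w) fw.
apply: filterS2 (near_ereal_gt (cf w) gt) (near_ereal_lt (cf w) lt) => x /= a b.
by rewrite fin_numE -ltey -ltNye a b.
Qed.

Lemma fine_continuous_at f x :
  continuous f -> (f x \is a fin_num)%E -> {for x, continuous (fun w => fine (f w) : R^o)}.
Proof.
move=> cf fx; have h : f @ x --> (fine (f x))%:E by rewrite fineK //; exact: cf.
exact: fine_cvg h.
Qed.

Lemma continuous_open_rays f :
  (forall r : R, open [set w | (f w < r%:E)%E]) ->
  (forall r : R, open [set w | (r%:E < f w)%E]) -> continuous f.
Proof.
move=> olt ogt w.
have Nlt r : (f w < r%:E)%E -> \forall x \near w, (f x < r%:E)%E.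
  by move=> h; apply: open_nbhs_nbhs; split => //; apply: olt.
have Ngt r : (r%:E < f w)%E -> \forall x \near w, (r%:E < f x)%E.
  by move=> h; apply: open_nbhs_nbhs; split => //; apply: ogt.
change (f @ w --> f w); case E: (f w) => [y| |].
- have near_y e : 0 < e -> \forall x \near w, ((y - e)%:E < f x < (y + e)%:E)%E.
    move=> e0; have h1 : (f w < (y + e)%:E)%E by rewrite E lte_fin; lra.
    have h2 : ((y - e)%:E < f w)%E by rewrite E lte_fin; lra.
    by apply: filterS2 (Nlt _ h1) (Ngt _ h2) => x /= -> ->.
  apply/fine_cvgP; split.
    apply: filterS (near_y 1 ltr01) => x /andP[a b].
    by rewrite fin_numE; apply/andP; split; apply/negP => /eqP e; move: a b; rewrite e.
  apply/cvgrPdist_lt => e e0; apply: filterS (near_y e e0) => x /= /andP[].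
  case: (f x) => [z| |] //=; rewrite !lte_fin ltr_distlC => a b.
  by apply/andP; split; lra.
- by apply/cvgeyPgt => A; apply: Ngt; rewrite E ltry.
- by apply/cvgeNyPlt => A; apply: Nlt; rewrite E ltNyr.
Qed.

Lemma le_on_dense f g S : continuous f -> continuous g -> dense S ->
  (forall w, S w -> (f w <= g w)%E) -> forall w, (f w <= g w)%E.
Proof.
move=> cf cg dS fg w; rewrite leNgt; apply/negP => /lte_between_fin[r /andP[gr rf]].
have : nbhs w [set x | (g x < r%:E)%E /\ (r%:E < f x)%E].
  by apply: filterS2 (near_ereal_lt (cg w) gr) (near_ereal_gt (cf w) rf).
rewrite nbhsE => -[V [oV Vw] VS].
have [x [Vx Sx]] := dS V (ex_intro _ w Vw) oV.
by have [a b] := VS x Vx; have := fg x Sx; rewrite leNgt (lt_trans a b).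
Qed.

Lemma eq_on_dense f g S : continuous f -> continuous g -> dense S ->
  (forall w, S w -> f w = g w) -> f = g.
Proof.
move=> cf cg dS fg; apply/funext => w; apply/eqP; rewrite eq_le.
by apply/andP; split; apply: (le_on_dense _ _ dS) w => // x Sx; rewrite fg.
Qed.

Lemma Cinf_open_dense f : Cinf f -> open_dense [set w | f w \is a fin_num]%E.
Proof.
move=> [cf nd]; split; first exact: open_fin_num.
move=> V [x Vx] oV; apply/set0P/negP => /eqP V0.
have : V `<=` interior (closure [set w | ~ (f w \is a fin_num)%E]).
  rewrite -open_subsetE // => z Vz; apply: subset_closure => /= fz.
  by have : (V `&` [set w | (f w \is a fin_num)%E]) z by []; rewrite V0.
by rewrite nd => /(_ x Vx).
Qed.

Lemma Cinf_cst (c : R) : Cinf (fun _ : K => c%:E).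
Proof.
split; first exact: cst_continuous.
rewrite /nowhere_dense (_ : [set w | _] = set0) ?closure0 ?interior0 //.
by apply/seteqP; split => // w /=; apply.
Qed.

End ExtendedRealContinuous.

Section Extension.
Variables (R : realType) (K : topologicalType) (U : set K) (s : K -> R).
Hypotheses (ED : @extremally_disconnected K) (oU : open U) (dU : dense U)
  (cs : forall x, U x -> {for x, continuous s}).

Let sublevel (r : R) := closure (U `&` [set x | s x < r]).

(* The extension is [inf {r | w lies in the closure of {s < r}}]; extremal
   disconnectedness makes these closures clopen, so both rays of it are open. *)
Let ext (w : K) : \bar R := ereal_inf (EFin @` [set r | sublevel r w]).

Let sublevel_open r : open (sublevel r).
Proof.
apply: ED; rewrite openE => x [Ux sx]; rewrite /interior.
have : \forall z \near x, s z < r.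
  by apply: (@cs _ Ux [set u | u < r]); apply: open_nbhs_nbhs; split => //; exact: open_lt.
by apply: filterS2 (open_nbhs_nbhs (conj oU Ux)) => z.
Qed.

Let sublevel_le r q : r <= q -> sublevel r `<=` sublevel q.
Proof. by move=> rq; apply: closureS => x [Ux sx]; split => //; exact: lt_le_trans rq. Qed.

Let ext_lt w r : (ext w < r%:E)%E <-> exists2 q, q < r & sublevel q w.
Proof.
split => [/ereal_inf_lt[_ [q Aq <-]]|[q qr Aq]]; first by rewrite lte_fin; exists q.
by apply: (@le_lt_trans _ _ q%:E); [apply: ge_ereal_inf; exists q%:E => //; exists q|].
Qed.

Let ext_gt w r : (r%:E < ext w)%E <-> exists2 q, r < q & ~ sublevel q w.
Proof.
split => [/lte_between_fin[q /andP[rq qh]]|[q rq nA]].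
  exists q; first by rewrite -lte_fin.
  move=> Aq; suff : (ext w <= q%:E)%E by rewrite leNgt qh.
  by apply: ge_ereal_inf; exists q%:E => //; exists q.
apply: (@lt_le_trans _ _ q%:E); first by rewrite lte_fin.
apply: le_ereal_inf_tmp => _ [p Ap <-]; rewrite lee_fin leNgt; apply/negP => pq.
exact/nA/(sublevel_le (ltW pq)).
Qed.

Let ext_eq x : U x -> ext x = (s x)%:E.
Proof.
move=> Ux; apply/eqP; rewrite eq_le; apply/andP; split.
  by rewrite leNgt; apply/negP => /ext_gt[q sq]; apply; apply: subset_closure.
rewrite leNgt; apply/negP => /ext_lt[q qs Aq].
have : nbhs x [set z | q < s z].
  by apply: (@cs _ Ux [set u | q < u]); apply: open_nbhs_nbhs; split => //; exact: open_gt.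
by move=> /Aq[z [[_ z1] z2]]; move: z1; rewrite /= ltNge (ltW z2).
Qed.

Let ext_continuous : continuous ext.
Proof.
apply: continuous_open_rays => r.
  have -> : [set w | (ext w < r%:E)%E] = \bigcup_(q in [set q | q < r]) sublevel q.
    by apply/seteqP; split => w /= => [/ext_lt|/(ext_lt w r)].
  by apply: bigcup_open => q _.
have -> : [set w | (r%:E < ext w)%E] = \bigcup_(q in [set q | r < q]) ~` sublevel q.
  by apply/seteqP; split => w /= => [/ext_gt|/(ext_gt w r)].
by apply: bigcup_open => q _; rewrite openC; exact: closed_closure.
Qed.

Lemma Cinf_extension : exists h : K -> \bar R, Cinf h /\ forall x, U x -> h x = (s x)%:E.
Proof.
exists ext; split=> //; split; first exact: ext_continuous.
apply/seteqP; split => // z hz; rewrite -(interior_setC_dense dU).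
have -> : ~` U = closure (~` U) by apply/closure_id; exact: open_closedC.
apply: (interiorS _ hz); apply: closureS => w /= nf Uw; by apply: nf; rewrite ext_eq.
Qed.

End Extension.

Section CinfArithmetic.
Variables (R : realType) (K : topologicalType).
Implicit Types (f d h : K -> \bar R).

Lemma is_scale_exists (c : R) f : @extremally_disconnected K -> Cinf f ->
  exists h, is_scale c f h.
Proof.
move=> ED Cf; have [oU dU] := Cinf_open_dense Cf.
have [h [Ch hU]] := Cinf_extension ED oU dU
  (fun x Ux => cvgM (cvg_cst c) (fine_continuous_at Cf.1 Ux)).
by exists h; split => // w fw; rewrite hU //= -{2}(fineK fw).
Qed.

Lemma is_sum_exists f d : @extremally_disconnected K -> Cinf f -> Cinf d ->
  exists h, is_sum f d h.
Proof.
move=> ED Cf Cd; have [oU dU] := open_denseI (Cinf_open_dense Cf) (Cinf_open_dense Cd).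
have [h [Ch hU]] := Cinf_extension ED oU dU
  (fun x Ux => cvgD (fine_continuous_at Cf.1 Ux.1) (fine_continuous_at Cd.1 Ux.2)).
by exists h; split => // w fw dw; rewrite hU // -[in RHS](fineK fw) -[in RHS](fineK dw).
Qed.

Let fin f := [set w | f w \is a fin_num]%E.

Let fin_dense f d : Cinf f -> Cinf d -> dense (fin f `&` fin d).
Proof. by move=> Cf Cd; case: (open_denseI (Cinf_open_dense Cf) (Cinf_open_dense Cd)). Qed.

Lemma is_sum_le f d h : Cinf f -> Cinf d -> is_sum f d h ->
  cle Defs.czero d -> cle f h.
Proof.
move=> Cf Cd [Ch hE] d0; apply: (le_on_dense Cf.1 Ch.1 (fin_dense Cf Cd)) => w [fw dw].
by rewrite hE //; apply: leeDl; exact: d0.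
Qed.

Lemma is_sum_ge0 f d h : Cinf f -> Cinf d -> is_sum f d h ->
  cle f h -> cle Defs.czero d.
Proof.
move=> Cf Cd [Ch hE] fh; apply: (le_on_dense (Cinf_cst K 0).1 Cd.1 (fin_dense Cf Cd)).
move=> w [fw dw]; have := fh w; rewrite hE // -(fineK fw) -(fineK dw) !lee_fin.
by rewrite lerDl.
Qed.

Lemma is_sum_idr f d : Cinf f -> Cinf d -> is_sum f d f -> d = Defs.czero.
Proof.
move=> Cf Cd [_ fE]; apply: (eq_on_dense Cd.1 (Cinf_cst K 0).1 (fin_dense Cf Cd)).
move=> w [fw dw]; have := fE w fw dw.
rewrite /Defs.czero /= -(fineK fw) -(fineK dw) -EFinD => e.
by congr EFin; have := EFin_inj e; lra.
Qed.

Lemma is_sum0r f h : Cinf f -> is_sum f Defs.czero h -> h = f.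
Proof.
move=> Cf [Ch hE]; apply: (eq_on_dense Ch.1 Cf.1 (fin_dense Cf (Cinf_cst K 0))).
by move=> w [fw _]; rewrite hE // adde0.
Qed.

Lemma riesz_ideal_diff (P : set (K -> \bar R)) f h :
  @extremally_disconnected K -> riesz_ideal P -> P f -> P h ->
  exists2 d, P d & is_sum f d h.
Proof.
move=> ED [PC _ Psum Pscale _] Pf Ph.
have [m mS] := is_scale_exists (-1) ED (PC _ Pf).
have Pm : P m := Pscale _ _ _ Pf mS.
have [d dS] := is_sum_exists ED (PC _ Ph) (PC _ Pm).
have Pd : P d := Psum _ _ _ Ph Pm dS.
have [e eS] := is_sum_exists ED (PC _ Pf) (PC _ Pd).
(* [d = h + (-f)] is only known where [h] and [f] are finite; to get
   [h = f + d] wherever [f] and [d] are finite, compare [h] with [e = f + d]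
   on a dense set. *)
suff eh : e = h by exists d; rewrite // -eh.
have [_ dense_fin] := open_denseI
  (open_denseI (Cinf_open_dense (PC _ Pf)) (Cinf_open_dense (PC _ Pd)))
  (open_denseI (Cinf_open_dense (PC _ Ph)) (Cinf_open_dense (PC _ Pm))).
apply: (eq_on_dense eS.1.1 (PC _ Ph).1 dense_fin) => w [[fw dw] [hw mw]].
rewrite eS.2 // dS.2 // mS.2 // -(fineK fw) -(fineK hw) /= -EFinM -!EFinD.
by congr EFin; lra.
Qed.

End CinfArithmetic.

Section ConditionalExpectation.
Variables (R : realType) (K : topologicalType).
Variables (P : set (K -> \bar R)) (F : (K -> \bar R) -> K -> \bar R).
Hypotheses (ED : @extremally_disconnected K) (RI : riesz_ideal P) (CE : cond_exp P F).

Lemma cond_exp_le f h : P f -> P h -> cle f h -> cle (F f) (F h).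
Proof.
move=> Pf Ph fh; have [PC _ _ _ _] := RI; have [Pstab [lsum _] _ [pos _] _] := CE.
have [d Pd dS] := riesz_ideal_diff ED RI Pf Ph.
have d0 := is_sum_ge0 (PC _ Pf) (PC _ Pd) dS fh.
exact: is_sum_le (PC _ (Pstab _ Pf)) (PC _ (Pstab _ Pd)) (lsum _ _ _ Pf Pd dS) (pos _ Pd d0).
Qed.

(* Strict positivity: [F (F f - f) = 0] with [F f - f >= 0] forces [F f = f]. *)
Lemma cond_exp_fixed f : P f -> cle f (F f) -> F f = f.
Proof.
move=> Pf fFf; have [PC _ _ _ _] := RI.
have [Pstab [lsum _] _ [_ spos] [proj _]] := CE.
have [d Pd dS] := riesz_ideal_diff ED RI Pf (Pstab _ Pf).
have d0 := is_sum_ge0 (PC _ Pf) (PC _ Pd) dS fFf.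
have Fd0 : F d = Defs.czero.
  have := lsum _ _ _ Pf Pd dS; rewrite proj // => FdS.
  exact: is_sum_idr (PC _ (Pstab _ Pf)) (PC _ (Pstab _ Pd)) FdS.
have d_eq0 : d = Defs.czero.
  apply: contrapT => dn; have [_] := spos _ Pd (conj d0 (nesym dn)).
  by rewrite Fd0.
by apply: is_sum0r (PC _ Pf) _; rewrite -d_eq0.
Qed.

End ConditionalExpectation.

Lemma exists_between (R : realType) (A B : set R) : A !=set0 -> B !=set0 ->
  (forall x y, A x -> B y -> x <= y) ->
  exists c, (forall x, A x -> x <= c) /\ (forall y, B y -> c <= y).
Proof.
move=> [x0 Ax0] [y0 By0] AB; exists (sup A); split.
  by apply: ub_le_sup; exists y0 => x Ax; exact: AB.
by move=> y By; apply: ge_sup; [exists x0 | move=> x Ax; exact: AB].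
Qed.

(* A subgradient of a convex function on [R^n] is built one coordinate at a
   time, as in the proof of the Hahn-Banach theorem. *)
Section AffineMinorant.
Variables (R : realType) (n : nat) (g : 'rV[R]_n -> R) (x0 : 'rV[R]_n).
Hypothesis cvx : convex_fun g.

Definition lin_form (a : 'I_n -> R) (v : 'rV[R]_n) := \sum_i a i * v 0 i.

Lemma lin_formD a u v l k :
  lin_form a (l *: u + k *: v) = l * lin_form a u + k * lin_form a v.
Proof.
rewrite /lin_form !mulr_sumr -big_split.
by apply: eq_bigr => i _; rewrite !mxE /=; ring.
Qed.

Definition vanishes_from m (v : 'rV[R]_n) := forall i : 'I_n, (m <= i)%N -> v 0 i = 0.

Definition partial_subgradient m a :=
  forall v, vanishes_from m v -> g x0 + lin_form a v <= g (x0 + v).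

Section ExtendCoordinate.
Variables (m : nat) (i0 : 'I_n) (a : 'I_n -> R).
Hypotheses (i0m : nat_of_ord i0 = m) (ma : partial_subgradient m a).

Let e : 'rV[R]_n := \row_j (j == i0)%:R.

Let slope (u : 'rV[R]_n) (la : R) :=
  (g (x0 + u + la *: e) - g x0 - lin_form a u) / la.

Let slope_le u v ln lp : vanishes_from m u -> vanishes_from m v ->
  ln < 0 -> 0 < lp -> slope u ln <= slope v lp.
Proof.
move=> mu mv ln0 lp0; pose lw := lp / (lp - ln).
have lw01 : 0 <= lw <= 1.
  by rewrite divr_ge0 ?ler_pdivrMr ?mul1r; [lra|lra|lra|lra].
have midpoint : lw *: (x0 + u + ln *: e) + (1 - lw) *: (x0 + v + lp *: e) =
                x0 + (lw *: u + (1 - lw) *: v).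
  by apply/rowP => j; rewrite !mxE /lw; field; lra.
have mw : vanishes_from m (lw *: u + (1 - lw) *: v).
  by move=> i hi; rewrite !mxE mu // mv // !mulr0 addr0.
have := cvx (x0 + u + ln *: e) (x0 + v + lp *: e) (andP lw01).1 (andP lw01).2.
rewrite midpoint => cv; have := le_trans (ma mw) cv; rewrite lin_formD /slope.
set G := g x0; set gu := g (x0 + u + _); set gv := g (x0 + v + _).
set lu := lin_form a u; set lv := lin_form a v => h.
have key : (lp - ln) * (lw * gu + (1 - lw) * gv - (G + (lw * lu + (1 - lw) * lv))) =
           (gu - G - lu) * lp - (gv - G - lv) * ln by rewrite /lw; field; lra.
rewrite ler_ndivrMr // mulrAC ler_pdivrMr // -subr_ge0 -key.
by rewrite mulr_ge0 ?subr_ge0 //; lra.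
Qed.

Let coordinate_slope : exists c, forall u la, vanishes_from m u ->
  g x0 + lin_form a u + c * la <= g (x0 + u + la *: e).
Proof.
have m0 : vanishes_from m 0 by move=> i _; rewrite mxE.
pose left := [set y | exists u la, [/\ vanishes_from m u, la < 0 & y = slope u la]].
pose right := [set y | exists u la, [/\ vanishes_from m u, 0 < la & y = slope u la]].
have [c [cl cr]] : exists c, (forall x, left x -> x <= c) /\ (forall y, right y -> c <= y).
  apply: exists_between; first by exists (slope 0 (-1)), 0, (-1); rewrite ltrN10.
    by exists (slope 0 1), 0, 1.
  by move=> _ _ [u [ln [mu ln0 ->]]] [v [lp [mv lp0 ->]]]; exact: slope_le.
exists c => u la mu; have [la0|la0|->] := ltgtP la 0.
- have : slope u la <= c by apply: cl; exists u, la.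
  by rewrite ler_ndivrMr //; lra.
- have : c <= slope u la by apply: cr; exists u, la.
  by rewrite ler_pdivlMr //; lra.
- by rewrite mulr0 scale0r !addr0; exact: ma.
Qed.

Lemma partial_subgradient_extend : exists a', partial_subgradient m.+1 a'.
Proof.
have [c hc] := coordinate_slope.
exists (fun i => if i == i0 then c else a i) => v mv.
pose la := v 0 i0; pose u := v - la *: e.
have mu : vanishes_from m u.
  move=> i hi; rewrite /u !mxE; case: eqP => [->|ne]; first by rewrite /la mulr1 subrr.
  rewrite mulr0 subr0; apply: mv; rewrite ltn_neqAle hi andbT -i0m.
  by apply/eqP => /val_inj/esym.
have -> : x0 + v = x0 + u + la *: e by rewrite /u -addrA subrK.
suff -> : lin_form (fun i => if i == i0 then c else a i) v = lin_form a u + c * la.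
  by rewrite addrA; exact: hc.
rewrite /lin_form (bigD1 i0) // [in RHS](bigD1 i0) //= eqxx.
rewrite /u !mxE eqxx mulr1 /la subrr mulr0 add0r addrC; congr (_ + _).
by apply: eq_bigr => i /negPf ine; rewrite ine !mxE ine mulr0 subr0.
Qed.

End ExtendCoordinate.

Lemma convex_affine_minorant : exists (a : 'I_n -> R) (b : R),
  (forall x, b + lin_form a x <= g x) /\ b + lin_form a x0 = g x0.
Proof.
have [a ha] : exists a, partial_subgradient n a.
  suff : forall m, (m <= n)%N -> exists a, partial_subgradient m a by apply.
  elim => [_|m IHm mn].
    exists (fun _ => 0) => v v0; rewrite /lin_form big1 => [|i _]; last by rewrite mul0r.
    have -> : v = 0 by apply/rowP => j; rewrite mxE; apply: v0.
    by rewrite !addr0.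
  have [a ma] := IHm (ltnW mn).
  exact: (@partial_subgradient_extend m (Ordinal mn) a erefl ma).
exists a, (g x0 - lin_form a x0); split; last by rewrite subrK.
move=> x; have nx : vanishes_from n (x - x0) by move=> i; rewrite leqNgt ltn_ord.
have := ha _ nx.
have := lin_formD a x x0 1 (-1); rewrite scale1r scaleN1r mul1r mulN1r => ->.
have -> : x0 + (x - x0) = x by rewrite addrC subrK.
lra.
Qed.

End AffineMinorant.

Section AffineCombination.
Variables (R : realType) (K : topologicalType) (I : eqType).
Variables (b : R) (a : I -> R).

Definition is_affine (s : seq I) (Z : I -> K -> \bar R) (L : K -> \bar R) :=
  forall w, (forall i, Z i w \is a fin_num)%E ->
    L w = (b + \sum_(i <- s) a i * fine (Z i w))%:E.

Lemma is_affine_nil Z L : is_scale b cone L -> is_affine [::] Z L.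
Proof. by move=> [_ LE] w _; rewrite LE // big_nil addr0 mule1. Qed.

Lemma is_affine_cons j s Z L M L' : is_affine s Z L -> is_scale (a j) (Z j) M ->
  is_sum L M L' -> is_affine (j :: s) Z L'.
Proof.
move=> LE [_ ME] [_ L'E] w Zw; rewrite L'E ?LE ?ME ?fin_numM //.
by rewrite big_cons -(fineK (Zw j)) -EFinM -EFinD /=; congr EFin; ring.
Qed.

Lemma affine_comb_exists (P : set (K -> \bar R)) F (Z : I -> K -> \bar R) s :
  @extremally_disconnected K -> riesz_ideal P -> P cone -> cond_exp P F ->
  (forall i, P (Z i)) ->
  exists2 L, P L & is_affine s Z L /\ is_affine s (fun i => F (Z i)) (F L).
Proof.
move=> ED [PC _ Psum Pscale _] P1 [_ [lsum lscale] _ _ [_ [_ _ F1]]] PZ.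
elim: s => [|j s [L PL [LE FLE]]].
  have [L LS] := is_scale_exists b ED (PC _ P1).
  exists L; first exact: Pscale _ _ _ P1 LS.
  by split; apply: is_affine_nil; last rewrite -F1; [|exact: lscale].
have [M MS] := is_scale_exists (a j) ED (PC _ (PZ j)).
have PM : P M := Pscale _ _ _ (PZ j) MS.
have [L' L'S] := is_sum_exists ED (PC _ PL) (PC _ PM).
exists L'; first exact: Psum _ _ _ PL PM L'S.
split; first exact: is_affine_cons LE MS L'S.
exact: is_affine_cons FLE (lscale _ _ _ (PZ j) MS) (lsum _ _ _ PL PM L'S).
Qed.

End AffineCombination.

Lemma cond_exp_jensen (R : realType) (K : topologicalType) (P : set (K -> \bar R))
    (F : (K -> \bar R) -> K -> \bar R) n (g : 'rV[R]_n -> R)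
    (X : 'I_n -> K -> \bar R) (G H : K -> \bar R) :
  @extremally_disconnected K -> riesz_ideal P -> P cone -> cond_exp P F ->
  convex_fun g -> (forall i, P (X i)) -> P G ->
  cinf_apply g X G -> cinf_apply g (fun i => F (X i)) H -> cle H (F G).
Proof.
move=> ED RI P1 CE cvx PX PG GE HE; have [PC _ _ _ _] := RI; have [Pstab _ _ _ _] := CE.
have all_fin (Z : 'I_n -> K -> \bar R) : (forall i, P (Z i)) ->
    dense [set w | forall i, i \in index_enum 'I_n -> Z i w \is a fin_num]%E.
  move=> PZ; have [_ //] := open_dense_all (index_enum 'I_n)
    (fun i => Cinf_open_dense (PC _ (PZ i))).
have := all_fin (fun i => F (X i)) (fun i => Pstab _ (PX i)).
move=> /(le_on_dense HE.1.1 (PC _ (Pstab _ PG)).1); apply.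
move=> w0 /(_ _ (mem_index_enum _)) FXw0.
have [a [b [minor touch]]] := convex_affine_minorant (\row_i fine (F (X i) w0)) cvx.
have [L PL [LE FLE]] := affine_comb_exists b a (index_enum 'I_n) ED RI P1 CE PX.
have LG : cle L G.
  apply: (le_on_dense (PC _ PL).1 (PC _ PG).1 (all_fin X PX)).
  move=> w /(_ _ (mem_index_enum _)) Xw; rewrite LE // GE.2 // lee_fin.
  by have := minor (\row_i fine (X i w)); rewrite /lin_form; under eq_bigr do rewrite mxE.
apply: le_trans (cond_exp_le ED RI CE PL PG LG w0).
rewrite FLE // HE.2 // -touch lee_fin /lin_form.
by under [in leLHS]eq_bigr do rewrite mxE.
Qed.

Theorem mainTheorem10 (R : realType) (K : topologicalType)
  (P : set (K -> \bar R)) (F : nat -> (K -> \bar R) -> (K -> \bar R))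
  (n : nat) (X : 'I_n -> nat -> K -> \bar R) (g : 'rV[R]_n -> R)
  (Y : nat -> K -> \bar R) :
  @stone_setting K ->
  riesz_ideal P -> order_dense P -> order_complete P -> P cone ->
  filtration P F ->
  (forall i, martingale P F (X i)) ->
  continuous_rv g -> convex_fun g ->
  (forall t, cinf_apply g (fun i => X i t) (Y t)) ->
  (forall t, P (Y t)) ->
  submartingale P F Y.
Proof.
move=> [_ _ ED] RI _ _ P1 [CE _] mart _ cvx Yg PY.
have PX i s : P (X i s).
  have [[adapted _] _] := mart i; have [f Pf <-] := adapted s.
  by have [Pstab _ _ _ _] := CE s; exact: Pstab.
have FX t s : (t <= s)%N -> (fun i => F t (X i s)) = (fun i => X i t).
  move=> ts; apply/funext => i; have [[_ sub] [_ super]] := mart i.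
  by apply/funext => w; apply/eqP; rewrite eq_le sub // super.
have jensen t s : (t <= s)%N -> cle (Y t) (F t (Y s)).
  move=> ts; apply: cond_exp_jensen ED RI P1 (CE t) cvx (fun i => PX i s) (PY s) (Yg s) _.
  by rewrite FX.
split=> [t|]; last exact: jensen.
by exists (Y t) => //; apply: (cond_exp_fixed ED RI (CE t)) => //; exact: jensen.
Qed.
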